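(* Let $M,N,K$ be positive integers, let $s,r$ be integers with $1\le r\le \min\{s,K\}$ and $s\le N$, and let $A\in\mathbb{R}^{M\times N}$. Suppose the map $Z\mapsto AZ$ is injective on $\Sigma_{s,r}$. Then for every $X\in\Sigma_s$ we have $\operatorname{rank}(X)=\operatorname{rank}(AX)$.
   Context: A matrix $X\in\mathbb{R}^{N\times K}$ is called $s$-row sparse if at most $s$ of its rows are non-zero. $\Sigma_s$ denotes the set of all $s$-row sparse matrices in $\mathbb{R}^{N\times K}$, and $\Sigma_{s,r}$ denotes the set of all $s$-row sparse matrices in $\mathbb{R}^{N\times K}$ of rank at least $r$. *)

From mathcomp Require Import all_boot all_order all_algebra.
From mathcomp Require Import reals.
Set Implicit Arguments. Unset Strict Implicit. Unset Printing Implicit Defensive.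
Import GRing.Theory Num.Theory.
Local Open Scope ring_scope.

Definition row_sparse (R : nzRingType) (N K s : nat) (X : 'M[R]_(N, K)) : bool :=
  (#|[set i : 'I_N | row i X != 0%R]| <= s)%N.

Definition Sigma_s (R : nzRingType) (N K s : nat) : pred 'M[R]_(N, K) :=
  fun X => row_sparse s X.

Definition Sigma_sr (R : fieldType) (N K s r : nat) : pred 'M[R]_(N, K) :=
  fun X => row_sparse s X && (r <= \rank X)%N.

From mathcomp Require Import all_boot all_order all_algebra.
From mathcomp Require Import reals.
Set Implicit Arguments. Unset Strict Implicit. Unset Printing Implicit Defensive.
Import GRing.Theory Num.Theory.
Local Open Scope ring_scope.

(* Always rank (A X) <= rank X.  If the inequality were strict, the column
   space of X would contain some x <> 0 with A x = 0, and x is s-row sparse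
   because its support lies in the row support of X.  Enlarge supp x to a set
   T of s rows and pick distinct rows f_0 = i0 (with x_i0 <> 0), f_1, ...,
   f_(r-1) in T.  The matrices Z_t with first column t x, k-th column e_(f_k)
   for 0 < k < r, and zero elsewhere are supported on T; for t <> 0 their rows
   f_0, ..., f_(r-1) form a lower triangular block with diagonal
   t x_i0, 1, ..., 1, so rank Z_t = r.  Yet A Z_1 = A Z_2 while Z_1 <> Z_2. *)

Lemma exists_superset_card (T : finType) (A : {set T}) n :
  (#|A| <= n <= #|T|)%N -> exists2 B : {set T}, A \subset B & #|B| = n.
Proof.
case/andP=> leAn lenT.
have /card_geqP[s [uniq_s size_s sCA]] : (n - #|A| <= #|~: A|)%N.
  by rewrite -[#|~: A|](addKn #|A|) cardsC leq_sub2r.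
exists (A :|: [set i in s]); first exact: subsetUl.
have disjAs : A :&: [set i in s] = set0.
  by apply/setP => i; rewrite !inE; apply/andP => -[iA /sCA]; rewrite inE iA.
by rewrite cardsU disjAs cards0 subn0 cardsE (card_uniqP uniq_s) size_s subnKC.
Qed.

Lemma exists_injection_ord_in (T : finType) (A : {set T}) (a : T) n :
  a \in A -> (n < #|A|)%N ->
  exists f : 'I_n.+1 -> T, [/\ injective f, f ord0 = a & forall k, f k \in A].
Proof.
move=> aA; rewrite (cardsD1 a A) aA ltnS => /card_geqP[s [uniq_s size_s sAa]].
have uniq_as : uniq (a :: s).
  by rewrite /= uniq_s andbT; apply/negP => /sAa; rewrite !inE eqxx.
exists (fun k => nth a (a :: s) k); split=> //.
- by move=> i j /eqP; rewrite nth_uniq //= ?size_s ?ltn_ord // => /eqP/val_inj.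
- case=> [[|k]] //= ltkn; have /sAa : nth a s k \in s by rewrite mem_nth ?size_s.
  by case/setD1P.
Qed.

Definition row_support (R : nzRingType) m n (X : 'M[R]_(m, n)) : {set 'I_m} :=
  [set i | row i X != 0].

Lemma row_support_cV (R : nzRingType) n (x : 'cV[R]_n) i :
  (i \in row_support x) = (x i 0 != 0).
Proof.
rewrite inE; congr negb; apply/eqP/eqP => [/rowP/(_ 0)|xi0]; first by rewrite !mxE.
by apply/rowP => j; rewrite ord1 !mxE.
Qed.

Lemma row_support_mulmx (R : nzRingType) m n p
    (X : 'M[R]_(m, n)) (B : 'M[R]_(n, p)) :
  row_support (X *m B) \subset row_support X.
Proof.
apply/subsetP => i; rewrite !inE row_mul.
by apply: contraNN => /eqP->; rewrite mul0mx.
Qed.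

Lemma row_sparse_mulmx (R : nzRingType) m n p s
    (X : 'M[R]_(m, n)) (B : 'M[R]_(n, p)) :
  row_sparse s X -> row_sparse s (X *m B).
Proof. exact/leq_trans/subset_leq_card/row_support_mulmx. Qed.

Lemma mxrank_mul_ltn_ker (R : fieldType) m n p
    (A : 'M[R]_(m, n)) (X : 'M[R]_(n, p)) :
  (\rank (A *m X) < \rank X)%N ->
  exists2 w : 'cV[R]_p, X *m w != 0 & A *m (X *m w) = 0.
Proof.
move=> lt_rank; have : (X^T :&: kermx A^T)%MS != 0.
  have := mxrank_mul_ker X^T A^T; rewrite -trmx_mul !mxrank_tr => rank_sum.
  by rewrite -mxrank_eq0 -lt0n -(ltn_add2l (\rank (A *m X))) addn0 rank_sum.
case/rowV0Pn => v; rewrite sub_capmx => /andP[/submxP[w ->] /sub_kermxP wXA] wX0.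
exists w^T.
- apply: contraNneq wX0 => Xw0; apply/eqP.
  by rewrite -[LHS]trmxK trmx_mul trmxK Xw0 trmx0.
- by apply: trmx_inj; rewrite !trmx_mul trmxK wXA trmx0.
Qed.

Section Witness.

Variables (R : fieldType) (N r : nat) (x : 'cV[R]_N) (f : 'I_r.+1 -> 'I_N).

Definition unit_cols : 'M[R]_(N, r.+1) :=
  \matrix_(i, k) ((k != ord0) && (i == f k))%:R.

Definition witness_mx (t : R) : 'M[R]_(N, r.+1) :=
  unit_cols + t *: (x *m delta_mx 0 ord0).

Lemma witness_mxE t i k :
  witness_mx t i k = if k == ord0 then t * x i 0 else (i == f k)%:R.
Proof.
rewrite !mxE big_ord1 !mxE eqxx /=.
by case: (k =P ord0) => [->|_] /=; rewrite ?add0r ?mulr1 ?mulr0 ?addr0.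
Qed.

Lemma mulmx_witness_mx M (A : 'M[R]_(M, N)) t :
  A *m x = 0 -> A *m witness_mx t = A *m unit_cols.
Proof. by move=> Ax0; rewrite mulmxDr -scalemxAr mulmxA Ax0 mul0mx scaler0 addr0. Qed.

Lemma row_support_witness_mx (T : {set 'I_N}) t :
  row_support x \subset T -> (forall k, f k \in T) ->
  row_support (witness_mx t) \subset T.
Proof.
move=> /subsetP supp_x fT; apply/subsetP => i; rewrite inE; apply: contraNT => iT.
have xi0 : x i 0 = 0.
  by apply/eqP; apply: contraNT iT => xi_neq0; apply: supp_x; rewrite row_support_cV.
apply/eqP/rowP => k; rewrite [LHS]mxE witness_mxE mxE xi0 mulr0.
by case: eqP => // _; case: eqP => // eq_i; rewrite eq_i fT in iT.
Qed.

Hypotheses (f_inj : injective f) (x_f0 : x (f ord0) 0 != 0).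

Lemma rowsub_witness_mx_unit t : t != 0 -> rowsub f (witness_mx t) \in unitmx.
Proof.
move=> t_neq0; rewrite unitmxE unitfE det_trig.
  rewrite big_ord_recl big1 => [|k _]; rewrite mxE witness_mxE ?eqxx.
    by rewrite mulr1 mulf_neq0.
  by rewrite [_ == ord0]eq_sym (negbTE (neq_lift _ _)).
apply/is_trig_mxP => i j lt_ij; rewrite mxE witness_mxE (inj_eq f_inj).
have j_neq0 : j != ord0 by rewrite -val_eqE -lt0n (leq_ltn_trans _ lt_ij).
by rewrite (negbTE j_neq0) -val_eqE (ltn_eqF lt_ij).
Qed.

Lemma mxrank_witness_mx t : t != 0 -> \rank (witness_mx t) = r.+1.
Proof.
move=> t_neq0; apply/eqP; rewrite eqn_leq rank_leq_col /=.
by rewrite -{1}(mxrank_unit (rowsub_witness_mx_unit t_neq0)) rowsubE mxrankM_maxr.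
Qed.

End Witness.

Lemma sparse_kernel_vector_not_injective (R : numFieldType) M N K s r
    (A : 'M[R]_(M, N)) (x : 'cV[R]_N) :
  (0 < r)%N -> (r <= minn s K)%N -> (s <= N)%N ->
  x != 0 -> A *m x = 0 -> row_sparse s x ->
  ~ {in @Sigma_sr R N K s r &, injective (mulmx A)}.
Proof.
case: r => // r _; rewrite leq_min => /andP[le_rs le_rK] le_sN.
move=> x_neq0 Ax0 sparse_x inj_A.
have /existsP[i0 xi0] : [exists i, x i 0 != 0].
  apply: contraNT x_neq0 => /existsPn x0.
  by apply/eqP/matrixP => i j; rewrite ord1 mxE; apply/eqP/negPn/x0.
have [T supp_xT card_T] : exists2 T : {set 'I_N}, row_support x \subset T & #|T| = s.
  by apply: exists_superset_card; rewrite card_ord le_sN andbT.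
have i0T : i0 \in T by apply: (subsetP supp_xT); rewrite row_support_cV.
have [f [f_inj f0 fT]] : exists f : 'I_r.+1 -> 'I_N,
    [/\ injective f, f ord0 = i0 & forall k, f k \in T].
  by apply: exists_injection_ord_in; rewrite ?card_T.
have free_pid : row_free (pid_mx r.+1 : 'M[R]_(r.+1, K)).
  by rewrite /row_free rank_pid_mx.
pose Z t : 'M[R]_(N, K) := witness_mx x f t *m pid_mx r.+1.
have Z_Sigma t : t != 0 -> Z t \in @Sigma_sr R N K s r.+1.
  move=> t_neq0; rewrite unfold_in /Sigma_sr /= (mxrankMfree _ free_pid).
  rewrite mxrank_witness_mx ?f0 // leqnn andbT; apply: row_sparse_mulmx.
  by rewrite /row_sparse -card_T subset_leq_card // row_support_witness_mx.
have AZ t : A *m Z t = A *m (unit_cols R f *m pid_mx r.+1).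
  by rewrite /Z !mulmxA mulmx_witness_mx.
have two_neq0 : (2 : R) != 0 by rewrite pnatr_eq0.
have := inj_A _ _ (Z_Sigma 1 (oner_neq0 _)) (Z_Sigma 2 two_neq0).
move=> /(_ (etrans (AZ 1) (esym (AZ 2))))/(row_free_inj free_pid)/matrixP.
move=> /(_ i0 ord0); rewrite !witness_mxE eqxx mul1r.
move/eqP; rewrite -subr_eq0 -{1}[x i0 0]mul1r -mulrBl mulf_eq0 (negbTE xi0) orbF.
by rewrite subr_eq0 (eqr_nat R 1 2).
Qed.

Theorem proposition1 (R : realType) (M N K s r : nat)
  (A : 'M[R]_(M, N)) :
  (0 < M)%N -> (0 < N)%N -> (0 < K)%N ->
  (1 <= r)%N -> (r <= minn s K)%N -> (s <= N)%N ->
  {in @Sigma_sr R N K s r &, injective (fun Z : 'M[R]_(N, K) => A *m Z)} ->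
  forall X : 'M[R]_(N, K), X \in @Sigma_s R N K s -> \rank X = \rank (A *m X).
Proof.
move=> _ _ _ r_gt0 le_r le_sN inj_A X sparse_X.
apply/eqP; rewrite eqn_leq mxrankM_maxr andbT leqNgt; apply/negP.
case/mxrank_mul_ltn_ker => w Xw_neq0 AXw0.
have sparse_Xw : row_sparse s (X *m w) := row_sparse_mulmx w sparse_X.
exact: (sparse_kernel_vector_not_injective r_gt0 le_r le_sN Xw_neq0 AXw0 sparse_Xw inj_A).
Qed.
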